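(* Let $G=(V,E)$ be a connected graph, let $\mathcal{B}$ be the set of blocks of $G$ which are not cut edges of pendant paths of $G$, and let $\mu(v)$ denote the number of blocks containing the vertex $v$. Then $$Z_c(G)\geq\sum_{B\in\mathcal{B}}\delta(G[B])-\sum_{p\in R_2\cup R_3}(\mu(p)-1),$$ where $R_2=\{v\in V:\kappa(G-v)=2,\ p(v)=0\}$ and $R_3=\{v\in V:\kappa(G-v)\geq 3\}$.
   Context: A block is a maximal subgraph with no articulation point. $\kappa(H)$ is the number of connected components of $H$; $\delta(H)$ is the minimum degree of $H$. A pendant path attached to a vertex $v$ is a set $P\subset V$ such that $G[P]$ is a path component of $G-v$, one of whose ends is adjacent to $v$ in $G$; $p(v)$ is the number of pendant paths attached to $v$; a cut edge of a pendant path is an edge of the path $G[P\cup\{v\}]$. Zero forcing: given a set $S$ of initially colored vertices, if a colored vertex $u$ has exactly one uncolored neighbor $w$, then $w$ becomes colored; $S$ is a zero forcing set if repeated application colors all vertices. $Z_c(G)$ is the minimum size of a zero forcing set $S$ with $G[S]$ connected. *)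

(* Simple graph on a finType T given by a symmetric,
   irreflexive relation e. All vertex subsets are {set T}. *)
From mathcomp Require Import all_boot.
Set Implicit Arguments. Unset Strict Implicit. Unset Printing Implicit Defensive.

Section Graph.
Variables (T : finType) (e : rel T).

Definition rel_in (C : {set T}) : rel T :=
  [rel x y | [&& e x y, x \in C & y \in C]].

(* G[C] is connected (the empty graph counts as connected) *)
Definition connected_in (C : {set T}) : bool :=
  [forall x in C, forall y in C, connect (rel_in C) x y].

Definition component_of (S C : {set T}) : bool :=
  [&& C \subset S, C != set0, connected_in C &
      [forall x in C, forall y in S, e x y ==> (y \in C)]].

Definition kappa_del (v : T) : nat :=
  #|[set C : {set T} | component_of (~: [set v]) C]|.

Definition deg_in (C : {set T}) (x : T) : nat := #|[set y in C | e x y]|.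

Definition mindeg (C : {set T}) : nat := \big[minn/#|T|]_(x in C) deg_in C x.

Definition nocut (C : {set T}) : bool :=
  connected_in C && [forall v in C, connected_in (C :\ v)].

(* a block: maximal (nonempty) vertex set inducing a connected subgraph
   without articulation point (blocks are induced subgraphs) *)
Definition block (B : {set T}) : bool :=
  [&& B != set0, nocut B &
      [forall B' : {set T}, (B \subset B') && nocut B' ==> (B' == B)]].

Definition mu (v : T) : nat := #|[set B : {set T} | block B & v \in B]|.

(* G[P] is a path: nonempty, connected, max degree <= 2, not a cycle *)
Definition is_path (P : {set T}) : bool :=
  [&& P != set0, connected_in P,
      [forall x in P, deg_in P x <= 2] &
      [exists x in P, deg_in P x <= 1]].

Definition path_end (P : {set T}) (x : T) : bool := (x \in P) && (deg_in P x <= 1).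

(* P is a pendant path attached to v: G[P] is a path component of G - v,
   and v is adjacent to an end of it (and to no other vertex of P, so
   that G[P u {v}] is a path) *)
Definition pendant (v : T) (P : {set T}) : bool :=
  [&& component_of (~: [set v]) P, is_path P &
      [exists x, path_end P x && ([set y in P | e v y] == [set x])]].

Definition npend (v : T) : nat := #|[set P : {set T} | pendant v P]|.

Definition pendant_cut_edge (B : {set T}) : bool :=
  [exists v, exists P : {set T}, exists x, exists y,
     [&& pendant v P, e x y, x \in v |: P, y \in v |: P & B == [set x; y]]].

Definition blocksB : {set {set T}} :=
  [set B : {set T} | block B & ~~ pendant_cut_edge B].

Definition force_step (S : {set T}) : {set T} :=
  S :|: [set w | [exists u in S, (e u w) && (w \notin S) &&
                    [forall y, (e u y && (y \notin S)) ==> (y == w)]]].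

(* the final coloring: forcing can never add more than #|T| vertices *)
Definition zf_closure (S : {set T}) : {set T} := iter #|T| force_step S.

Definition zero_forcing (S : {set T}) : bool := zf_closure S == setT.

Definition Zc : nat :=
  \big[minn/#|T|]_(S in [set S : {set T} | connected_in S & zero_forcing S]) #|S|.

Definition R2 : {set T} := [set v | (kappa_del v == 2) && (npend v == 0)].
Definition R3 : {set T} := [set v | 3 <= kappa_del v].

End Graph.

From mathcomp Require Import all_boot all_order all_algebra zify.
Set Implicit Arguments. Unset Strict Implicit. Unset Printing Implicit Defensive.

(* Fix a connected zero forcing set S and, for every vertex w outside S, a vertex f(w) that
   forces w. In a block B, consider the first force u -> w with u, w in B: at that moment u and
   all its neighbours in B other than w are coloured, and every coloured vertex of B is in S or
   was forced from outside B. Hence delta(G[B]) <= deg_B(u) <= |S n B| + |C(B)|, where C(B) is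
   the set of vertices of B \ S forced from outside B (without such a force, B is contained in
   S u C(B)). Summing over the blocks of [blocksB] charges every v in S once per such block
   containing it, and every other v once per such block containing v but not f(v). As v and
   f(v) share a block, this charge is at most [v in S] + mu(v) - 1. If v is not in R2 u R3,
   then G - v has at most two components, the second one being a pendant path P; two blocks
   at v are separated by v, and each block of [blocksB] at v leaves P u {v}, so these blocks
   all coincide. The charge then exceeds [v in S] only when v is not in S and f(v) is in P,
   which forces S to lie inside P. This happens for at most one vertex v, and its excess of
   one is paid by a vertex of S, which lies in no block of [blocksB]. *)

Lemma bigmin_leq (I : eqType) (r : seq I) (F : I -> nat) (d : nat) (i : I) :
  i \in r -> \big[minn/d]_(j <- r) F j <= F i.
Proof.
elim: r => [//|j r IH]; rewrite inE big_cons => /predU1P [->|ir].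
  exact: geq_minl.
exact: leq_trans (geq_minr _ _) (IH ir).
Qed.

Lemma card_sum_mem (T : finType) (A : {set T}) : #|A| = \sum_v (v \in A).
Proof. by rewrite -sum1_card big_mkcond; apply: eq_bigr => v _; case: (v \in A). Qed.

Lemma sum_mem_card (I : finType) (A : {set I}) (P : pred I) :
  \sum_(i in A) P i = #|[set i in A | P i]|.
Proof.
rewrite -sum1_card big_mkcond [RHS]big_mkcond; apply: eq_bigr => i _ /=.
by rewrite inE; case: (i \in A); case: (P i).
Qed.

Section Graph.
Variables (T : finType) (e : rel T).
Hypothesis e_sym : symmetric e.
Hypothesis e_irr : irreflexive e.
Implicit Types (A B C D P X Y : {set T}) (q : seq T) (u v w x y z : T).

Lemma rel_in_sym C : symmetric (rel_in e C).
Proof. by move=> x y; rewrite /rel_in /= e_sym (andbC (x \in C)). Qed.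

Lemma connect_in_sym C x y : connect (rel_in e C) x y = connect (rel_in e C) y x.
Proof. exact: (sym_connect_sym (rel_in_sym C)). Qed.

Lemma connect_in_sub C D x y : C \subset D ->
  connect (rel_in e C) x y -> connect (rel_in e D) x y.
Proof.
move=> sCD; apply: connect_sub => a b /and3P [eab aC bC].
by apply: connect1; rewrite /rel_in /= eab !(subsetP sCD).
Qed.

Lemma connect_in_memr C x y : connect (rel_in e C) x y -> y = x \/ y \in C.
Proof.
case/connectP => p; case/lastP: p => [|p z] /=; first by move=> _ ->; left.
by rewrite rcons_path last_rcons => /andP [_ /and3P [_ _ zC]] ->; right.
Qed.

Lemma connect_closed (r : rel T) (K : {set T}) x y :
  (forall a b, r a b -> a \in K -> b \in K) -> connect r x y -> x \in K -> y \in K.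
Proof.
move=> clK /connectP [p rp ->]; elim: p x rp => [|z p IH] x //= /andP [rxz rp] xK.
exact: IH rp (clK _ _ rxz xK).
Qed.

Lemma connected_inP C :
  reflect (forall x y, x \in C -> y \in C -> connect (rel_in e C) x y)
          (connected_in e C).
Proof.
apply: (iffP forall_inP) => [cC x y xC yC|cC x xC].
  by move/forall_inP: (cC x xC); apply.
by apply/forall_inP => y; apply: cC.
Qed.

Lemma connected_in_neighbor C x y : connected_in e C -> x \in C -> y \in C ->
  x != y -> exists2 z, e x z & z \in C.
Proof.
move=> /connected_inP cC xC yC; case/connectP: (cC x y xC yC) => [[|z p]] /=.
  by move=> _ ->; rewrite eqxx.
by case/andP => /and3P [exz _ zC] _ _ _; exists z.
Qed.

Lemma connected_in_small C : #|C| <= 1 -> connected_in e C.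
Proof.
move=> C1; apply/connected_inP => x y xC yC.
suff -> : y = x by apply: connect0.
by apply/eqP; apply: contraLR C1 => nyx; rewrite -ltnNge; apply/card_gt1P; exists y, x.
Qed.

Lemma connected_in_toP C x :
  x \in C -> (forall y, y \in C -> connect (rel_in e C) y x) -> connected_in e C.
Proof.
move=> xC to_x; apply/connected_inP => y z yC zC.
by apply: connect_trans (to_x y yC) _; rewrite connect_in_sym; apply: to_x.
Qed.

Lemma connected_inU X Y x : connected_in e X -> connected_in e Y ->
  x \in X -> x \in Y -> connected_in e (X :|: Y).
Proof.
move=> /connected_inP cX /connected_inP cY xX xY.
apply: (@connected_in_toP _ x); first by rewrite inE xX.
move=> y /setUP [yX|yY].
  exact: connect_in_sub (subsetUl X Y) (cX _ _ yX xX).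
exact: connect_in_sub (subsetUr X Y) (cY _ _ yY xY).
Qed.

Lemma connected_inU_edge X Y x y : connected_in e X -> connected_in e Y ->
  x \in X -> y \in Y -> e x y -> connected_in e (X :|: Y).
Proof.
move=> cX cY xX yY exy.
have cXy : connected_in e (X :|: [set y]).
  apply: (@connected_in_toP _ x); first by rewrite inE xX.
  move=> z /setUP [zX|]; last rewrite inE => /eqP ->.
    by apply: connect_in_sub (subsetUl _ _) _; move/connected_inP: cX; apply.
  by apply: connect1; rewrite /rel_in /= e_sym exy !inE xX eqxx orbT.
rewrite -(setUidPr (_ : [set y] \subset Y)) ?sub1set // setUA.
by apply: connected_inU cXy cY _ yY; rewrite !inE eqxx orbT.
Qed.

Lemma connect_in_sorted C (s : seq T) : sorted e s -> {subset s <= C} ->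
  {in s &, forall x y, connect (rel_in e C) x y}.
Proof.
elim: s => [|x s IH] //= xs_e xsC.
have sC : {subset s <= C} by move=> y ys; apply: xsC; rewrite inE ys orbT.
have from_x y : y \in x :: s -> connect (rel_in e C) x y.
  rewrite inE => /predU1P [->|ys]; first exact: connect0.
  case: s IH xs_e xsC sC ys => [//|x' s] IH /= /andP [exx' s_e] xsC sC ys.
  apply: (@connect_trans _ _ x' _ _ (connect1 _)).
    by rewrite /rel_in /= exx' xsC ?sC ?mem_head // inE mem_head orbT.
  exact: IH s_e sC _ _ (mem_head _ _) ys.
move=> y z ys zs; apply: connect_trans (from_x z zs).
by rewrite connect_in_sym from_x.
Qed.

Lemma connected_in_sorted (s : seq T) : sorted e s -> connected_in e [set x in s].
Proof.
move=> s_e; apply/connected_inP => x y; rewrite !inE.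
by apply: connect_in_sorted => // z; rewrite inE.
Qed.

Lemma connected_inU_sorted X (s : seq T) x : connected_in e X -> sorted e s -> x \in X ->
  (s = [::] \/ exists2 y, y \in s & e x y) -> connected_in e (X :|: [set y in s]).
Proof.
move=> cX s_e xX [->|[y ys exy]]; first by rewrite set_nil setU0.
by apply: connected_inU_edge cX (connected_in_sorted s_e) xX _ exy; rewrite inE.
Qed.

Lemma setD1_notin C v : v \notin C -> C :\ v = C.
Proof.
by move=> vC; apply/setP => x; rewrite in_setD1; case: eqVneq => // ->; rewrite (negbTE vC).
Qed.

Lemma nocutP C :
  reflect (connected_in e C /\ forall v, connected_in e (C :\ v)) (nocut e C).
Proof.
apply: (iffP andP) => [[cC /forall_inP dC]|[cC dC]]; split=> //.
  by move=> v; have [/dC|/setD1_notin ->] := boolP (v \in C).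
by apply/forall_inP => v _.
Qed.

Lemma nocutU A B : nocut e A -> nocut e B -> 1 < #|A :&: B| -> nocut e (A :|: B).
Proof.
move=> /nocutP [cA dA] /nocutP [cB dB] /card_gt1P [x [y [/setIP [xA xB]]]].
case/setIP=> yA yB nxy; apply/nocutP; split; first exact: connected_inU cA cB xA xB.
move=> v; rewrite setDUl.
have [<-|nxv] := eqVneq x v.
  by apply: (connected_inU (x := y)) (dA x) (dB x) _ _; rewrite in_setD1 eq_sym nxy.
by apply: (connected_inU (x := x)) (dA v) (dB v) _ _; rewrite in_setD1 nxv.
Qed.

Lemma nocut_small C : connected_in e C -> #|C| <= 2 -> nocut e C.
Proof.
move=> cC C2; apply/nocutP; split=> // v.
have [vC|/setD1_notin -> //] := boolP (v \in C).
by apply: connected_in_small; rewrite (cardsD1 v C) vC add1n ltnS in C2.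
Qed.

Lemma nocut_set1 x : nocut e [set x].
Proof. by apply: nocut_small; [apply: connected_in_small|]; rewrite cards1. Qed.

Lemma nocut_set2 x y : e x y -> nocut e [set x; y].
Proof.
move=> exy; apply: nocut_small; last by rewrite cards2; case: (x != y).
by apply: connected_inU_edge exy; rewrite ?set11 // connected_in_small ?cards1.
Qed.

Lemma blockP B :
  reflect [/\ B != set0, nocut e B & forall B', nocut e B' -> B \subset B' -> B' = B]
          (block e B).
Proof.
apply: (iffP and3P) => [[B0 nB /forallP maxB]|[B0 nB maxB]]; split=> //.
  by move=> B' nB' sBB'; apply/eqP; move: (maxB B'); rewrite sBB' nB'.
by apply/forallP => B'; apply/implyP => /andP [sBB' nB']; rewrite (maxB _ nB' sBB').
Qed.

Lemma block_sup X : nocut e X -> X != set0 -> exists2 B, block e B & X \subset B.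
Proof.
move=> nX X0; have [B /maxsetP [nB maxB] sXB] := maxset_exists nX.
exists B => //; apply/blockP; split=> //.
by case/set0Pn: X0 => x /(subsetP sXB) xB; apply/set0Pn; exists x.
Qed.

Lemma block_of x : exists2 B, block e B & x \in B.
Proof.
have [|B bB] := block_sup (nocut_set1 x); first by apply/set0Pn; exists x; rewrite inE.
by rewrite sub1set; exists B.
Qed.

Lemma block_edge x y : e x y -> exists2 B, block e B & (x \in B) && (y \in B).
Proof.
move=> exy; have [|B bB] := block_sup (nocut_set2 exy).
  by apply/set0Pn; exists x; rewrite !inE eqxx.
by move=> sB; exists B; rewrite // !(subsetP sB) // !inE eqxx ?orbT.
Qed.

Lemma block_eq B1 B2 : block e B1 -> block e B2 -> 1 < #|B1 :&: B2| -> B1 = B2.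
Proof.
move=> /blockP [_ n1 max1] /blockP [_ n2 max2] B12.
have n12 := nocutU n1 n2 B12.
by rewrite -(max1 _ n12 (subsetUl _ _)) (max2 _ n12 (subsetUr _ _)).
Qed.

Lemma block_card_gt1 B x y : block e B -> x \in B -> e x y -> 1 < #|B|.
Proof.
move=> /blockP [_ _ maxB] xB exy; rewrite ltnNge; apply/negP => B1.
have sB : B \subset [set x; y].
  apply/subsetP => z zB; rewrite !inE; apply/orP; left; apply/eqP.
  by apply: contraTeq B1 => nzx; rewrite -ltnNge; apply/card_gt1P; exists z, x.
have yB : y \in B by rewrite -(maxB _ (nocut_set2 exy) sB) !inE eqxx orbT.
have nxy : x != y by apply: contraTneq exy => ->; rewrite e_irr.
by move: B1; rewrite leqNgt => /negP; apply; apply/card_gt1P; exists x, y.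
Qed.

Lemma nocut_ear A a a' q : nocut e A -> a \in A -> a' \in A -> a != a' ->
  uniq q -> sorted e q -> {subset q <= ~: A} ->
  e a (head a q) -> e a' (last a' q) -> nocut e (A :|: [set y in q]).
Proof.
move=> /nocutP [cA dA] aA a'A naa' q_uniq q_e qA eaq ea'q.
have q_ne : q != [::] by case: q eaq {q_uniq q_e qA ea'q} => //=; rewrite e_irr.
have head_q : head a q \in q.
  by case: q q_ne {q_uniq q_e qA eaq ea'q} => // y s _; exact: mem_head.
apply/nocutP; split=> [|z].
  by apply: connected_inU_sorted cA q_e aA _; right; exists (head a q).
have [zq|zq] := boolP (z \in q); last first.
  have -> : (A :|: [set y in q]) :\ z = (A :\ z) :|: [set y in q].
    apply/setP => y; rewrite !inE.
    by case: eqVneq => [->|] //=; rewrite (negbTE zq).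
  have [<-|nza] := eqVneq a z; last first.
    apply: (@connected_inU_sorted _ _ a) (dA z) q_e _ _; first by rewrite in_setD1 nza.
    by right; exists (head a q).
  apply: (@connected_inU_sorted _ _ a') (dA a) q_e _ _; first by rewrite in_setD1 eq_sym naa'.
  right; exists (last a' q) => //.
  by case: q q_ne {q_uniq qA eaq ea'q head_q zq} => // y s _; exact: (mem_last y s).
have zA : z \notin A by have := qA z zq; rewrite inE.
move: q_uniq q_e eaq ea'q; case/splitPr: zq => q1 q2.
rewrite cat_uniq /= => /and3P [_ /norP [zq1 _] /andP [zq2 _]] q_e eaq ea'q.
have -> : (A :|: [set y in q1 ++ z :: q2]) :\ z = (A :|: [set y in q1]) :|: [set y in q2].
  apply/setP => y; rewrite !inE mem_cat !inE.
  case: eqVneq => [->|] /=; last by rewrite orbA.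
  by rewrite (negbTE zA) (negbTE zq1) (negbTE zq2).
have [q1_e /path_sorted q2_e] := cat_sorted2 q_e.
apply: (@connected_inU_sorted _ _ a') _ q2_e _ _.
- apply: connected_inU_sorted cA q1_e aA _.
  case: q1 {zq1 q_e ea'q} eaq => [|y q1] /= eay; [left | right; exists y] => //.
  exact: mem_head.
- by rewrite inE a'A.
case/lastP: q2 {zq2 q_e eaq} ea'q => [|q2 y]; [left | right; exists y] => //.
by rewrite mem_rcons mem_head.
by rewrite last_cat /= last_rcons in ea'q.
Qed.

Lemma path_in_sub C x p : path (rel_in e C) x p -> {subset p <= C}.
Proof.
elim: p x => [|y p IH] x //= /andP [/and3P [_ _ yC] y_p] z.
by rewrite inE => /predU1P [->|]; last exact: IH y_p z.
Qed.

Lemma block_no_ear A a a' u u' : block e A -> a \in A -> a' \in A -> a != a' ->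
  u \notin A -> e a u -> e a' u' -> ~~ connect (rel_in e (~: A)) u u'.
Proof.
move=> /blockP [_ nA maxA] aA a'A naa' uA eau ea'u'; apply/negP.
case/connectP => p0 p0_in u'E; rewrite {u'}u'E in ea'u'.
case: (shortenP p0_in) ea'u' => p p_in p_uniq _ ea'p.
have qA : {subset u :: p <= ~: A}.
  by move=> y; rewrite inE => /predU1P [->|/(path_in_sub p_in)]; rewrite ?inE.
have q_e : sorted e (u :: p) by apply: sub_path p_in => x y /and3P [].
have nAq := nocut_ear nA aA a'A naa' p_uniq q_e qA eau ea'p.
by move: uA; rewrite -(maxA _ nAq (subsetUl _ _)) !inE eqxx !orbT.
Qed.

Lemma connect_exit D A x y : connect (rel_in e D) x y -> x \in A -> y \notin A ->
  exists c u, [&& c \in A, c \in D, u \in D, u \notin A, e c u &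
                  connect (rel_in e (D :\: A)) u y].
Proof.
move=> /connectP [p x_p ->] xA yA.
suff [[/negP] //|//] : (x \notin A /\ connect (rel_in e (D :\: A)) x (last x p)) \/
    exists c u, [&& c \in A, c \in D, u \in D, u \notin A, e c u &
                    connect (rel_in e (D :\: A)) u (last x p)].
elim: p x x_p {xA} yA => [|x' p IH] x /=; first by left; split=> //; apply: connect0.
case/andP => /and3P [exx' xD x'D] x'_p yA.
have [[x'A x'_y]|] := IH x' x'_p yA; last by right.
have [xA|xA] := boolP (x \in A); first by right; exists x, x'; rewrite xA xD x'D x'A exx'.
left; split=> //; apply: connect_trans x'_y; apply: connect1.
by rewrite /rel_in /= exx' !inE xA x'A xD x'D.
Qed.

Lemma blocks_eq_connect B1 B2 v b1 b2 : block e B1 -> block e B2 ->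
  v \in B1 -> v \in B2 -> b1 \in B1 -> b2 \in B2 -> b1 != v -> b2 != v ->
  connect (rel_in e (~: [set v])) b1 b2 -> B1 = B2.
Proof.
move=> bB1 bB2 vB1 vB2 b1B1 b2B2 b1v b2v b1_b2.
have [B12|B12] := boolP (1 < #|B1 :&: B2|); first exact: block_eq.
(* Otherwise B1 and B2 meet only in v, and the walk from b1 to b2 avoiding v, continued
   inside B2 up to v, is an ear of B1. *)
have only_v w : w \in B1 -> w \in B2 -> w = v.
  move=> wB1 wB2; apply/eqP; apply: contraNT B12 => wv; apply/card_gt1P.
  by exists w, v; rewrite !inE wB1 wB2 vB1 vB2.
have b2B1 : b2 \notin B1 by apply: contra b2v => /only_v ->.
have [c [u /and5P [cB1 cv uv uB1 /andP [ecu u_b2]]]] := connect_exit b1_b2 b1B1 b2B1.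
case/blockP: (bB2) => _ /nocutP [/connected_inP cB2 _] _.
have b2_v : b2 \notin [set v] by rewrite inE.
have [v' [u' /and5P [/set1P -> _ u'B2 u'v /andP [evu' u'_b2]]]] :=
  connect_exit (cB2 _ _ vB2 b2B2) (set11 v) b2_v.
have u'B1 : u' \notin B1 by apply: contra u'v => /only_v/(_ u'B2) ->; apply: set11.
have cv' : c != v by rewrite !inE in cv.
case/negP: (block_no_ear bB1 cB1 vB1 cv' uB1 ecu evu').
apply: (@connect_trans _ _ b2).
  by apply: connect_in_sub u_b2; apply/subsetP => w; rewrite !inE => /andP [].
rewrite connect_in_sym; apply: connect_in_sub u'_b2; apply/subsetP => w.
by rewrite !inE => /andP [wv wB2]; apply: contra wv => /only_v/(_ wB2) ->.
Qed.

Lemma component_sub X C : component_of e X C -> C \subset X.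
Proof. by case/and4P. Qed.

Lemma component_closed X C w y : component_of e X C -> w \in C ->
  connect (rel_in e X) w y -> y \in C.
Proof.
case/and4P => _ _ _ /forall_inP clC wC w_y; apply: (connect_closed _ w_y wC).
move=> a b /and3P [eab _ bX] aC; move/forall_inP: (clC a aC) => /(_ b bX).
by rewrite eab.
Qed.

Lemma component_of_connect X w : w \in X ->
  component_of e X [set y | connect (rel_in e X) w y].
Proof.
move=> wX; set C := [set y | _].
have wC : w \in C by rewrite inE connect0.
have CX : C \subset X by apply/subsetP => y; rewrite inE => /connect_in_memr [->|].
have w_C y : y \in C -> connect (rel_in e C) w y.
  rewrite inE => /connectP [p w_p ->]; elim/last_ind: p w_p => [|p z IH] /=.
    by rewrite connect0.
  rewrite rcons_path last_rcons => /andP [w_p /and3P [ez pX zX]].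
  have pC : last w p \in C by rewrite inE; apply/connectP; exists p.
  have zC : z \in C.
    rewrite inE; apply/connectP; exists (rcons p z); last by rewrite last_rcons.
    by rewrite rcons_path w_p /rel_in /= ez pX zX.
  by apply: connect_trans (IH w_p) (connect1 _); rewrite /rel_in /= ez pC zC.
apply/and4P; split=> //.
- by apply/set0Pn; exists w.
- by apply: (connected_in_toP wC) => y /w_C; rewrite connect_in_sym.
apply/forall_inP => a aC; apply/forall_inP => b bX; apply/implyP => eab.
move: (aC); rewrite !inE => w_a; apply: (connect_trans w_a); apply: connect1.
by rewrite /rel_in /= eab bX (subsetP CX a aC).
Qed.

Lemma component_subset X Y C D x : component_of e X C -> component_of e Y D ->
  C \subset Y -> x \in C -> x \in D -> C \subset D.
Proof.
move=> cC cD CY xC xD; apply/subsetP => y yC; apply: (component_closed cD xD).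
apply: connect_in_sub CY _; case/and4P: cC => _ _ /connected_inP cC _; exact: cC.
Qed.

Lemma kappa_del_connect v w1 w2 : w1 != v -> w2 != v ->
  ~~ connect (rel_in e (~: [set v])) w1 w2 ->
  exists C1 C2, [/\ component_of e (~: [set v]) C1, component_of e (~: [set v]) C2,
                    C1 != C2, w1 \in C1 & w2 \in C2].
Proof.
move=> w1v w2v w1_w2.
have X1 : w1 \in ~: [set v] by rewrite !inE.
have X2 : w2 \in ~: [set v] by rewrite !inE.
exists [set y | connect (rel_in e (~: [set v])) w1 y],
       [set y | connect (rel_in e (~: [set v])) w2 y].
split; rewrite ?component_of_connect ?inE ?connect0 //.
by apply: contraNneq w1_w2 => /setP /(_ w2); rewrite !inE connect0 => ->.
Qed.

Lemma connect_kappa_le1 v w1 w2 : kappa_del e v <= 1 -> w1 != v -> w2 != v ->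
  connect (rel_in e (~: [set v])) w1 w2.
Proof.
move=> kv w1v w2v; apply: contraTT kv => /(kappa_del_connect w1v w2v).
case=> C1 [C2 [cC1 cC2 C12 _ _]]; rewrite -ltnNge; apply/card_gt1P.
by exists C1, C2; rewrite !inE cC1 cC2.
Qed.

Lemma connect_kappa_le2 v P w1 w2 : kappa_del e v <= 2 ->
  component_of e (~: [set v]) P -> w1 != v -> w2 != v -> w1 \notin P -> w2 \notin P ->
  connect (rel_in e (~: [set v])) w1 w2.
Proof.
move=> kv cP w1v w2v w1P w2P; apply: contraTT kv => /(kappa_del_connect w1v w2v).
case=> C1 [C2 [cC1 cC2 C12 w1C1 w2C2]]; rewrite -ltnNge; apply/card_gt2P.
exists P, C1, C2; rewrite !inE cP cC1 cC2; split=> //; split=> //.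
  by apply: contraNneq w1P => ->.
by apply: contraNneq w2P => <-.
Qed.

Lemma nocut_two_neighbors B x : nocut e B -> 2 < #|B| -> x \in B ->
  exists z1 z2, [&& z1 != z2, z1 \in B, z2 \in B, e x z1 & e x z2].
Proof.
case/nocutP=> cB dB B3 xB.
have [y] : exists y, y \in B :\ x.
  by apply/card_gt0P; move: (cardsD1 x B) B3; rewrite xB; lia.
rewrite in_setD1 eq_sym => /andP [xy yB].
have [z1 exz1 z1B] := connected_in_neighbor cB xB yB xy.
have z1x : z1 != x by apply: contraTneq exz1 => ->; rewrite e_irr.
have xB1 : x \in B :\ z1 by rewrite in_setD1 eq_sym z1x.
have [y'] : exists y', y' \in (B :\ z1) :\ x.
  apply/card_gt0P; move: (cardsD1 z1 B) (cardsD1 x (B :\ z1)) B3.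
  by rewrite z1B xB1; lia.
rewrite in_setD1 eq_sym => /andP [xy' y'B].
have [z2 exz2] := connected_in_neighbor (dB z1) xB1 y'B xy'.
rewrite in_setD1 => /andP [z2z1 z2B].
by exists z1, z2; rewrite eq_sym z2z1 z1B z2B exz1 exz2.
Qed.

Lemma pendantP v P : pendant e v P ->
  [/\ component_of e (~: [set v]) P, v \notin P &
      exists x, [/\ x \in P, e v x & forall y, y \in P -> e v y -> y = x]].
Proof.
case/and3P => cP _ /existsP [x /andP [/andP [xP _] /eqP Nv]]; split=> //.
  by apply/negP => /(subsetP (component_sub cP)); rewrite !inE eqxx.
have xN : x \in [set y in P | e v y] by rewrite Nv set11.
exists x; split=> //; first by move: xN; rewrite inE => /andP [].
by move=> y yP evy; apply/set1P; rewrite -Nv inE yP evy.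
Qed.

Lemma pendant_nocut_small v P B : pendant e v P -> nocut e B -> B \subset v |: P ->
  #|B| <= 2.
Proof.
case/and3P => cP /and4P [_ cnP /forall_inP degP /exists_inP [x1 x1P degx1]].
case/existsP=> x0 /andP [_ /eqP Nv] nB sB; rewrite leqNgt; apply/negP => B3.
(* Every vertex of B has two neighbours in B: this fails at v, which has a single neighbour
   in P, and then, B being inside the path P and closed under its edges, at an end of P. *)
have vB : v \notin B.
  apply/negP => /(nocut_two_neighbors nB B3) [z1 [z2 /and5P [z12 z1B z2B e1 e2]]].
  have inN z : z \in B -> e v z -> z \in [set y in P | e v y].
    move=> zB evz; rewrite inE evz andbT.
    by case/setU1P: (subsetP sB _ zB) evz => // ->; rewrite e_irr.
  move: (inN _ z1B e1) (inN _ z2B e2); rewrite Nv !inE => /eqP z1x0 /eqP z2x0.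
  by rewrite z1x0 z2x0 eqxx in z12.
have BP : B \subset P.
  apply/subsetP => z zB; case/setU1P: (subsetP sB _ zB) => // zv.
  by move: vB; rewrite -zv zB.
have B_closed a b : rel_in e P a b -> a \in B -> b \in B.
  move=> /and3P [eab aP bP] /(nocut_two_neighbors nB B3) [z1 [z2 /and5P [z12 z1B z2B e1 e2]]].
  apply: contraT => bB.
  suff : 2 < #|[set y in P | e a y]| by rewrite ltnNge degP.
  apply/card_gt2P; exists z1, z2, b; rewrite !inE e1 e2 eab bP !(subsetP BP) //.
  by split=> //; split=> //; [apply: contraNneq bB => <- | apply: contraNneq bB => ->].
have PB : P \subset B.
  have [b bB] : exists b, b \in B by apply/card_gt0P; apply: leq_trans B3.
  apply/subsetP => p pP; apply: (connect_closed B_closed _ bB).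
  by move/connected_inP: cnP; apply => //; apply: (subsetP BP).
have [z1 [z2 /and5P [z12 z1B z2B e1 e2]]] := nocut_two_neighbors nB B3 (subsetP PB _ x1P).
suff : 1 < #|[set y in P | e x1 y]| by rewrite ltnNge degx1.
by apply/card_gt1P; exists z1, z2; rewrite !inE e1 e2 !(subsetP BP).
Qed.

Lemma nocut_pendant_sub v P B y : pendant e v P -> nocut e B -> y \in B -> y \in P ->
  B \subset v |: P.
Proof.
case/pendantP=> cP vP _ /nocutP [_ dB] yB yP.
have yv : y != v by apply: contraNneq vP => <-.
apply/subsetP => b bB; rewrite !inE; have [//|bv] := eqVneq b v.
apply: (component_closed cP yP); apply: (@connect_in_sub (B :\ v)).
  by apply/subsetP => z; rewrite !inE => /andP [].
by move/connected_inP: (dB v); apply; rewrite in_setD1 ?yv ?bv.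
Qed.

Hypothesis G_conn : connected_in e [set: T].

Lemma exists_neighbor x y : x != y -> exists z, e x z.
Proof.
move=> xy; have [z exz _] := connected_in_neighbor G_conn (in_setT x) (in_setT y) xy.
by exists z.
Qed.

Lemma block_other B v w : block e B -> v \in B -> w != v -> exists2 b, b \in B & b != v.
Proof.
move=> bB vB; rewrite eq_sym => vw; have [z evz] := exists_neighbor vw.
have /card_gt1P [x [y [xB yB xy]]] := block_card_gt1 bB vB evz.
have [xv|] := eqVneq x v; last by exists x.
by exists y => //; rewrite -xv eq_sym.
Qed.

Lemma pendant_cut_edge_sub v P B : pendant e v P -> block e B -> B \subset v |: P ->
  pendant_cut_edge e B.
Proof.
move=> pP bB sB; have /blockP [B0 nB _] := bB.
have B2 := pendant_nocut_small pP nB sB.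
case/pendantP: (pP) => _ _ [x [_ evx _]].
have /card_gt1P [b1 [b2 [b1B b2B b12]]] : 1 < #|B|.
  case/set0Pn: B0 => b b_B; have [bv|bv] := eqVneq b v.
    by apply: (block_card_gt1 bB b_B (y := x)); rewrite bv.
  by have [z ebz] := exists_neighbor bv; apply: block_card_gt1 bB b_B ebz.
have EB : B = [set b1; b2].
  by apply/eqP; rewrite eq_sym eqEcard cards2 b12 B2 andbT subUset !sub1set b1B b2B.
case/nocutP: nB => cB _.
have [z eb1z] := connected_in_neighbor cB b1B b2B b12.
rewrite {1}EB !inE => /predU1P [zb1|/eqP zb2]; first by rewrite zb1 e_irr in eb1z.
rewrite {z}zb2 in eb1z.
apply/existsP; exists v; apply/existsP; exists P; apply/existsP; exists b1.
apply/existsP; exists b2.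
by rewrite pP eb1z !(subsetP sB) // {1}EB eqxx.
Qed.

Lemma blocksB_notin_pendant v P B y : pendant e v P -> B \in blocksB e -> y \in P ->
  y \notin B.
Proof.
rewrite inE => pP /andP [bB npcB] yP; apply: contra npcB => yB.
have /blockP [_ nB _] := bB.
exact: pendant_cut_edge_sub pP bB (nocut_pendant_sub pP nB yB yP).
Qed.

Lemma blocksB_pendant_exit v P B : pendant e v P -> B \in blocksB e ->
  exists2 b, b \in B & (b != v) && (b \notin P).
Proof.
rewrite inE => pP /andP [bB npcB].
have /subsetPn [b b_B] : ~~ (B \subset v |: P).
  by apply: contra npcB; apply: pendant_cut_edge_sub.
by rewrite !inE negb_or; exists b.
Qed.

Lemma blocksB_pendant_eq v P B0 w : kappa_del e v <= 2 -> pendant e v P ->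
  block e B0 -> v \in B0 -> w \in B0 -> w != v -> w \notin P ->
  forall B, B \in blocksB e -> v \in B -> B = B0.
Proof.
move=> kv pP bB0 vB0 wB0 wv wP B hB vB.
have [b bB /andP [bv bP]] := blocksB_pendant_exit pP hB.
have [cP _ _] := pendantP pP.
move: hB; rewrite inE => /andP [bB' _].
exact: blocks_eq_connect bB' bB0 vB vB0 bB wB0 bv wv (connect_kappa_le2 kv cP bv wv bP wP).
Qed.

Lemma blocks_eq_kappa_le1 v B1 B2 : kappa_del e v <= 1 -> block e B1 -> block e B2 ->
  v \in B1 -> v \in B2 -> B1 = B2.
Proof.
move=> kv bB1 bB2 vB1 vB2.
have [w wv|onlyv] := pickP (predC1 v); last first.
  apply/setP => z; suff -> : z = v by rewrite vB1 vB2.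
  by apply/eqP; move: (onlyv z); rewrite /= => /negbFE.
have [b1 b1B1 b1v] := block_other bB1 vB1 wv.
have [b2 b2B2 b2v] := block_other bB2 vB2 wv.
exact: blocks_eq_connect bB1 bB2 vB1 vB2 b1B1 b2B2 b1v b2v (connect_kappa_le1 kv b1v b2v).
Qed.

Lemma mindeg_le B x : x \in B -> mindeg e B <= deg_in e B x.
Proof.
move=> xB; rewrite /mindeg -big_filter.
by apply: bigmin_leq; rewrite mem_filter xB mem_index_enum.
Qed.

Lemma mu_gt0 v : 0 < mu e v.
Proof. by have [B bB vB] := block_of v; apply/card_gt0P; exists B; rewrite inE bB vB. Qed.

Lemma zero_forcing_setT : zero_forcing e [set: T].
Proof.
rewrite /zero_forcing /zf_closure; apply/eqP; elim: #|T| => //= n ->.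
by apply/eqP; rewrite eqEsubset subsetT subsetUl.
Qed.

Section Forcing.
Variable S : {set T}.
Hypothesis S_conn : connected_in e S.
Hypothesis S_zf : zero_forcing e S.

Definition colored k := iter k (force_step e) S.

Lemma colored_mono k k' : k <= k' -> colored k \subset colored k'.
Proof.
move=> /subnK <-; elim: (k' - k) => [|n IH]; first by rewrite add0n.
by apply: subset_trans IH _; rewrite addSn /colored iterS; apply: subsetUl.
Qed.

Definition forces k u w :=
  [&& u \in colored k, e u w, w \notin colored k &
      [forall y, (e u y && (y \notin colored k)) ==> (y == w)]].

Lemma exists_forces w : w \notin S -> exists p : 'I_#|T| * T, forces p.1 p.2 w.
Proof.
move=> wS; have wT : w \in colored #|T|.
  by rewrite /colored -/(zf_closure e S) (eqP S_zf) inE.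
have [k [kT wk wk1]] : exists k, [/\ k < #|T|, w \notin colored k & w \in colored k.+1].
  elim: #|T| wT => [|n IH] wn; first by rewrite wn in wS.
  have [/IH [k [kn wk wk1]]|wn'] := boolP (w \in colored n); last by exists n.
  by exists k; split=> //; apply: ltnW.
move: wk1; rewrite /colored iterS -/(colored k) /force_step in_setU (negbTE wk) /= inE.
case/exists_inP => u uk /andP [/andP [euw _] only_w].
by exists (Ordinal kT, u); rewrite /forces /= uk euw wk only_w.
Qed.

(* For w in S there is no force, and [forcer w], [force_time w] are junk. *)
Definition some_force w := [pick p : 'I_#|T| * T | forces p.1 p.2 w].
Definition forcer w := if some_force w is Some p then p.2 else w.
Definition force_time w := if some_force w is Some p then val p.1 else 0.

Lemma forcesP w : w \notin S -> forces (force_time w) (forcer w) w.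
Proof.
move=> wS; rewrite /forcer /force_time /some_force; case: pickP => [p //|none].
by have [p] := exists_forces wS; rewrite none.
Qed.

Lemma forcer_edge w : w \notin S -> e (forcer w) w.
Proof. by case/forcesP/and4P. Qed.

Definition forced_from_outside B := [set w in B | (w \notin S) && (forcer w \notin B)].

Lemma colored_before_inner_force B k :
  (forall y, y \in B -> y \notin S -> forcer y \in B -> k <= force_time y) ->
  B :&: colored k \subset (S :&: B) :|: forced_from_outside B.
Proof.
move=> inner_late; apply/subsetP => y /setIP [yB yk]; rewrite !inE yB andbT /=.
have [//|yS /=] := boolP (y \in S); apply/negP => fyB.
have /and4P [_ _ /negP ykf _] := forcesP yS; apply: ykf.
exact: subsetP (colored_mono (inner_late y yB yS fyB)) _ yk.
Qed.

Lemma deg_forcer_le B w : w \notin S -> w \in B -> forcer w \in B ->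
  deg_in e B (forcer w) <= #|B :&: colored (force_time w)|.
Proof.
move=> wS wB uB; have /and4P [uk euw wk /forallP only_w] := forcesP wS.
set u := forcer w in uB uk euw only_w *; set k := force_time w in uk wk only_w *.
set N := [set y in B | e u y].
have wN : w \in N by rewrite inE wB euw.
have uN : u \notin N by rewrite inE e_irr andbF.
have sub : u |: (N :\ w) \subset B :&: colored k.
  apply/subsetP => y; rewrite !inE => /predU1P [->|/and3P [yw yB euy]].
    by rewrite uB uk.
  rewrite yB /=; apply: contraT => yk.
  by move: (only_w y); rewrite euy yk /= (negbTE yw).
rewrite /deg_in -/N.
have <- : #|u |: (N :\ w)| = #|N|.
  by rewrite cardsU1 in_setD1 (negbTE uN) andbF (cardsD1 w N) wN.
exact: subset_leq_card sub.
Qed.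

Lemma mindeg_le_forcing B : B != set0 ->
  mindeg e B <= #|S :&: B| + #|forced_from_outside B|.
Proof.
move=> B0; set W := [set w in B | (w \notin S) && (forcer w \in B)].
(* k is the time of the first force inside B, or #|T| if there is none. *)
suff [x xB [k [degx inner_late]]] : exists2 x, x \in B & exists k,
    deg_in e B x <= #|B :&: colored k| /\
    forall y, y \in B -> y \notin S -> forcer y \in B -> k <= force_time y.
  apply: leq_trans (mindeg_le xB) (leq_trans degx _).
  apply: leq_trans (subset_leq_card (colored_before_inner_force inner_late)) _.
  by rewrite cardsU leq_subr.
have [W0|[w wW]] := set_0Vmem W; last first.
  case: (arg_minnP force_time wW) => w0 w0W minw0.
  have /[!inE] /and3P [w0B w0S fw0B] : w0 \in W := w0W.
  exists (forcer w0) => //; exists (force_time w0); split; first exact: deg_forcer_le.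
  move=> y yB yS fyB; have yW : y \in W by rewrite inE yB yS fyB.
  exact: minw0 yW.
case/set0Pn: B0 => x xB; exists x => //; exists #|T|; split.
  have S_all : colored #|T| = [set: T] by apply/eqP; exact: S_zf.
  by rewrite S_all setIT; apply: subset_leq_card; apply/subsetP => y; rewrite inE => /andP [].
move=> y yB yS fyB; suff : y \in W by rewrite W0 inE.
by rewrite inE yB yS fyB.
Qed.

Definition charge v :=
  \sum_(B in blocksB e) ((v \in S :&: B) + (v \in forced_from_outside B)).

Definition budget v := (v \in S) + (if v \in R2 e :|: R3 e then mu e v - 1 else 0).

Lemma sum_mindeg_le_charge : \sum_(B in blocksB e) mindeg e B <= \sum_v charge v.
Proof.
rewrite /charge exchange_big /=; apply: leq_sum => B; rewrite inE => /andP [bB _].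
have /blockP [B0 _ _] := bB.
by rewrite big_split /= -!card_sum_mem; apply: mindeg_le_forcing.
Qed.

Lemma sum_budget :
  \sum_v budget v = #|S| + \sum_(p in R2 e :|: R3 e) (mu e p - 1).
Proof. by rewrite big_split /= -card_sum_mem [in RHS]big_mkcond. Qed.

Lemma charge_S v : v \in S -> charge v = #|[set B in blocksB e | v \in B]|.
Proof.
move=> vS; rewrite /charge -sum_mem_card; apply: eq_bigr => B _.
by rewrite !inE vS /= andbF addn0.
Qed.

Lemma charge_notin_S v : v \notin S ->
  charge v = #|[set B in blocksB e | (v \in B) && (forcer v \notin B)]|.
Proof.
move=> vS; rewrite /charge -sum_mem_card; apply: eq_bigr => B _.
by rewrite !inE (negbTE vS).
Qed.

Lemma charge_le_blocks v : charge v <= #|[set B in blocksB e | v \in B]|.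
Proof.
have [vS|vS] := boolP (v \in S); first by rewrite charge_S.
rewrite charge_notin_S //; apply: subset_leq_card; apply/subsetP => B.
by rewrite !inE => /andP [-> /andP [-> _]].
Qed.

Lemma charge_gt0_block v : 0 < charge v -> exists2 B, B \in blocksB e & v \in B.
Proof.
move/leq_trans/(_ (charge_le_blocks v))/card_gt0P => [B].
by rewrite inE => /andP [hB vB]; exists B.
Qed.

Lemma charge_eq0 v : v \notin S ->
  {in blocksB e, forall B, v \in B -> forcer v \in B} -> charge v = 0.
Proof.
move=> vS fB; rewrite charge_notin_S //; apply/eqP; rewrite cards_eq0; apply/eqP/setP => B.
by rewrite !inE; apply/negP => /andP [hB /andP [vB /negP []]]; apply: fB; rewrite ?inE.
Qed.

Lemma card_blocksB_le1 v :
  {in blocksB e &, forall B1 B2, v \in B1 -> v \in B2 -> B1 = B2} ->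
  #|[set B in blocksB e | v \in B]| <= 1.
Proof.
move=> uniqB; rewrite leqNgt; apply/negP => /card_gt1P [B1 [B2 []]].
rewrite !inE => /andP [hB1 vB1] /andP [hB2 vB2].
by rewrite (uniqB B1 B2) ?eqxx ?inE.
Qed.

Lemma charge_le_mu v : charge v <= (v \in S) + (mu e v - 1).
Proof.
have [vS|vS] := boolP (v \in S).
  rewrite add1n subn1 prednK ?mu_gt0 // (leq_trans (charge_le_blocks v)) //.
  by apply: subset_leq_card; apply/subsetP => B; rewrite !inE => /andP [/andP [-> _] ->].
have [B0 bB0 /andP [fB0 vB0]] := block_edge (forcer_edge vS).
rewrite charge_notin_S // /mu (cardsD1 B0) inE bB0 vB0 add0n add1n subn1 /=.
apply: subset_leq_card; apply/subsetP => B; rewrite !inE.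
case/andP => /andP [-> _] /andP [-> fB]; rewrite !andbT.
by apply: contraNneq fB => ->.
Qed.

Lemma charge_kappa_le1 v : kappa_del e v <= 1 -> charge v <= (v \in S).
Proof.
move=> kv.
have uniqB B1 B2 : B1 \in blocksB e -> B2 \in blocksB e -> v \in B1 -> v \in B2 -> B1 = B2.
  rewrite !inE => /andP [bB1 _] /andP [bB2 _]; exact: blocks_eq_kappa_le1.
have [vS|vS] := boolP (v \in S).
  by rewrite charge_S //; apply: card_blocksB_le1 => B1 B2; apply: uniqB.
rewrite charge_eq0 // => B; rewrite inE => /andP [bB _] vB.
have [B0 bB0 /andP [fB0 vB0]] := block_edge (forcer_edge vS).
by rewrite (blocks_eq_kappa_le1 kv bB bB0 vB vB0).
Qed.

Lemma colored_meets_component v P k y : component_of e (~: [set v]) P ->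
  v \notin colored k -> y \in P -> y \in colored k -> exists2 s, s \in S & s \in P.
Proof.
move=> cP; elim: k y => [|k IH] y vk yP; first by exists y.
have vk' : v \notin colored k by apply: contra vk; apply/subsetP/colored_mono.
rewrite /colored iterS -/(colored k) /force_step in_setU => /orP [yk|]; first exact: IH yk.
rewrite inE => /exists_inP [u uk /andP [/andP [euy _] _]].
have uv : u != v by apply: contraNneq vk' => <-.
apply: (IH u) => //; apply: (component_closed cP yP); apply: connect1.
by rewrite /rel_in /= e_sym euy (subsetP (component_sub cP)) // !inE.
Qed.

Lemma component_sup_S v P s : component_of e (~: [set v]) P -> v \notin S ->
  s \in S -> s \in P -> S \subset P.
Proof.
move=> cP vS sS sP; apply/subsetP => s' s'S; apply: (component_closed cP sP).
apply: (@connect_in_sub S).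
  by apply/subsetP => z zS; rewrite !inE; apply: contraNneq vS => <-.
by move/connected_inP: S_conn; apply.
Qed.

Lemma deficient_pendant v : budget v < charge v ->
  [/\ v \notin S, charge v <= 1, budget v = 0 &
      exists P, [/\ pendant e v P, S != set0 & S \subset P]].
Proof.
move=> def.
have vR : v \notin R2 e :|: R3 e.
  by apply: contraTN def => vR; rewrite -leqNgt /budget vR charge_le_mu.
have budget_v : budget v = (v \in S) by rewrite /budget (negbTE vR) addn0.
move: vR; rewrite !inE negb_or negb_and -ltnNge => /andP [kv_npend kv3].
have kv : kappa_del e v = 2.
  apply/eqP; rewrite eqn_leq -ltnS kv3 ltnNge /=.
  by apply: contraTN def => kv1; rewrite -leqNgt budget_v charge_kappa_le1.
have [P pP] : exists P, pendant e v P.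
  by move: kv_npend; rewrite kv /= -lt0n => /card_gt0P [P]; rewrite inE; exists P.
have [cP vP _] := pendantP pP.
have kv2 : kappa_del e v <= 2 by rewrite kv.
have uniqB : {in blocksB e &, forall B1 B2, v \in B1 -> v \in B2 -> B1 = B2}.
  move=> B1 B2 hB1 hB2 vB1 vB2.
  have [b2 b2B2 /andP [b2v b2P]] := blocksB_pendant_exit pP hB2.
  move: (hB2); rewrite inE => /andP [bB2 _].
  exact: blocksB_pendant_eq kv2 pP bB2 vB2 b2B2 b2v b2P B1 hB1 vB1.
have charge1 := leq_trans (charge_le_blocks v) (card_blocksB_le1 uniqB).
have vS : v \notin S by apply: contraTN def => vS; rewrite -leqNgt budget_v vS.
have /and4P [fk _ vk _] := forcesP vS.
have fvP : forcer v \in P.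
  apply: contraTT def => fvP; rewrite -leqNgt budget_v (negbTE vS) leqn0.
  apply/eqP/charge_eq0 => // B hB vB.
  have [B0 bB0 /andP [fB0 vB0]] := block_edge (forcer_edge vS).
  have fv : forcer v != v by apply: contraTneq (forcer_edge vS) => ->; rewrite e_irr.
  by rewrite (blocksB_pendant_eq kv2 pP bB0 vB0 fB0 fv fvP hB vB).
have [s sS sP] := colored_meets_component cP vk fvP fk.
split=> //; first by rewrite budget_v (negbTE vS).
exists P; split=> //; last exact: component_sup_S cP vS sS sP.
by apply/set0Pn; exists s.
Qed.

Lemma charge_pendant_S v P s : pendant e v P -> S \subset P -> s \in S -> charge s = 0.
Proof.
move=> pP SP sS; rewrite charge_S //; apply/eqP; rewrite cards_eq0; apply/eqP/setP => B.
rewrite !inE; apply/negP => /andP [hB sB].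
by move: sB; apply/negP; apply: blocksB_notin_pendant pP _ (subsetP SP _ sS); rewrite inE.
Qed.

Lemma deficient_unique v1 v2 : budget v1 < charge v1 -> budget v2 < charge v2 -> v1 = v2.
Proof.
move=> def1 def2; apply/eqP; apply: contraT => v12.
have [_ _ _ [P1 [pP1 S0 SP1]]] := deficient_pendant def1.
have [_ _ _ [P2 [pP2 _ SP2]]] := deficient_pendant def2.
have [B1 hB1 v1B1] := charge_gt0_block (leq_ltn_trans (leq0n _) def1).
have [B2 hB2 v2B2] := charge_gt0_block (leq_ltn_trans (leq0n _) def2).
have v1P2 : v1 \notin P2 := contraL (blocksB_notin_pendant pP2 hB1) v1B1.
have v2P1 : v2 \notin P1 := contraL (blocksB_notin_pendant pP1 hB2) v2B2.
have [c1 _ _] := pendantP pP1; have [c2 _ [x2 [x2P2 ev2x2 _]]] := pendantP pP2.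
have avoid P v : v \notin P -> P \subset ~: [set v].
  by move=> vP; apply/subsetP => y yP; rewrite !inE; apply: contraNneq vP => <-.
case/set0Pn: S0 => s sS; have sP1 := subsetP SP1 s sS; have sP2 := subsetP SP2 s sS.
have P12 : P1 = P2.
  apply/eqP; rewrite eqEsubset (component_subset c1 c2 (avoid _ _ v2P1) sP1 sP2).
  exact: (component_subset c2 c1 (avoid _ _ v1P2) sP2 sP1).
have x2P1 : x2 \in P1 by rewrite P12.
case/negP: v2P1; apply: (component_closed c1 x2P1); apply: connect1.
by rewrite /rel_in /= e_sym ev2x2 (subsetP (component_sub c1)) // !inE eq_sym.
Qed.

Lemma sum_charge_le_budget : \sum_v charge v <= \sum_v budget v.
Proof.
have [v0 def0|none] := pickP (fun v => budget v < charge v); last first.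
  by apply: leq_sum => v _; rewrite leqNgt none.
have [v0S charge1 budget0 [P [pP S0 SP]]] := deficient_pendant def0.
case/set0Pn: S0 => s sS; have sv0 : s != v0 by apply: contraNneq v0S => <-.
rewrite (bigD1 v0) // [X in _ <= X](bigD1 v0) //= (bigD1 s) ?sv0 //=.
rewrite [X in _ <= _ + X](bigD1 s) ?sv0 //= (charge_pendant_S pP SP sS) budget0.
rewrite add0n addnA leq_add //; first by rewrite /budget sS add1n (leq_trans charge1).
apply: leq_sum => v /andP [vv0 _]; rewrite leqNgt; apply: contra vv0 => def.
by rewrite (deficient_unique def def0).
Qed.

Lemma sum_mindeg_le :
  \sum_(B in blocksB e) mindeg e B <= #|S| + \sum_(p in R2 e :|: R3 e) (mu e p - 1).
Proof.
by rewrite -sum_budget; apply: leq_trans sum_mindeg_le_charge sum_charge_le_budget.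
Qed.
End Forcing.
End Graph.

Local Open Scope ring_scope.

Theorem corollary1 (T : finType) (e : rel T)
  (e_sym : symmetric e) (e_irr : irreflexive e)
  (G_conn : connected_in e [set: T]) :
  ((\sum_(B in blocksB e) mindeg e B)%N%:Z
     - (\sum_(p in R2 e :|: R3 e) (mu e p - 1))%N%:Z <= (Zc e)%:Z :> int).
Proof.
set lhs := (\sum_(B in blocksB e) mindeg e B)%N.
set rhs := (\sum_(p in R2 e :|: R3 e) (mu e p - 1))%N.
have bound S : S \in [set S | connected_in e S & zero_forcing e S] -> (lhs <= #|S| + rhs)%N.
  by rewrite inE => /andP [S_conn S_zf]; apply: sum_mindeg_le.
have : (lhs <= Zc e + rhs)%N.
  rewrite /Zc; apply: (big_ind (fun m => lhs <= m + rhs)%N).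
  - by rewrite -cardsT; apply: bound; rewrite inE G_conn zero_forcing_setT.
  - by move=> m n lhs_m lhs_n; rewrite addn_minl leq_min lhs_m lhs_n.
  - exact: bound.
by clearbody lhs rhs; clear bound => key; lia.
Qed.
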